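(* Let $A=\{a_1,\dots,a_n\}$ with $n\ge2$. Then $CT(A^{\ast})/I_f(A^{\ast})\cong C_n$.
   Context: $A^{\ast}$ is the free monoid on $A$; $A^{\omega}$ is the set of right-infinite strings over $A$. For $x,y\in A^\ast$, $x\le_p y$ if $x=yz$ for some $z$; a prefix code is a set of pairwise $\le_p$-incomparable strings. A definite language is $X\cup YA^{\ast}$ with $X,Y$ finite; $x\in L$ is unbounded if $xA^{\ast}\subseteq L$, bounded otherwise. A permissible map is a bijection between definite languages preserving boundedness and unboundedness with $\alpha(xy)=\alpha(x)y$ for unbounded $x$ and all $y\in A^\ast$. $CT(A^{\ast})$ is the set of permissible maps (an inverse monoid of partial bijections of $A^\ast$; it is a Boolean inverse $\wedge$-monoid). $I_f(A^{\ast})$ is the set of all bijections between finite subsets of $A^{\ast}$, an additive ideal of $CT(A^{\ast})$ (a semigroup ideal closed under joins of compatible pairs). For a Boolean inverse $\wedge$-semigroup $S$ and additive ideal $I$, $S/I$ denotes $S/\varepsilon_I$ where $(a,b)\in\varepsilon_I$ iff $a\setminus(a\wedge b)\in I$ and $b\setminus(a\wedge b)\in I$; here for $c\le a$, $a\setminus c=a(\mathbf{d}(a)\setminus\mathbf{d}(c))$ with $\mathbf{d}(a)=a^{-1}a$ and $\setminus$ on idempotents the Boolean relative complement. The Cuntz inverse monoid $C_n$ consists of all bijections $f\colon XA^{\omega}\to YA^{\omega}$, with $X,Y$ finite prefix codes, for which there is a bijection $f_1\colon X\to Y$ with $f(xw)=f_1(x)w$ for all $x\in X$, $w\in A^{\omega}$,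 under composition of partial bijections of $A^\omega$. *)

From mathcomp Require Import all_boot.
Set Implicit Arguments. Unset Strict Implicit. Unset Printing Implicit Defensive.

(* Alphabet A = {a_1,...,a_n} is 'I_n.  A^* = seq 'I_n,  A^omega = nat -> 'I_n. *)
Definition word (n : nat) := seq 'I_n.
Definition stream (n : nat) := nat -> 'I_n.

Definition pfun (T : Type) := T -> option T.

Definition pcompose {T : Type} (f g : pfun T) : pfun T := fun x => obind f (g x).

Definition peq {T : Type} (f g : pfun T) : Prop := forall x, f x = g x.

Definition pinj {T : Type} (f : pfun T) : Prop :=
  forall x x' y, f x = Some y -> f x' = Some y -> x = x'.
Definition pdom {T : Type} (f : pfun T) : T -> Prop := fun x => f x <> None.
Definition pran {T : Type} (f : pfun T) : T -> Prop := fun y => exists x, f x = Some y.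

Definition definite n (L : word n -> Prop) : Prop :=
  exists X Y : seq (word n),
    forall w, L w <-> (w \in X \/ exists2 y, y \in Y & prefix y w).

Definition unbounded n (L : word n -> Prop) (x : word n) : Prop :=
  forall z, L (x ++ z).

Definition CT n (a : pfun (word n)) : Prop :=
  [/\ pinj a, definite (pdom a), definite (pran a),
      (forall x y, a x = Some y -> (unbounded (pdom a) x <-> unbounded (pran a) y))
    & (forall x y, a x = Some y -> unbounded (pdom a) x ->
         forall z, a (x ++ z) = Some (y ++ z))].

Definition Ifin n (a : pfun (word n)) : Prop :=
  [/\ pinj a, (exists s : seq (word n), forall x, pdom a x -> x \in s)
    & (exists s : seq (word n), forall y, pran a y -> y \in s)].

Definition pmeet n (a b : pfun (word n)) : pfun (word n) :=
  fun x => if a x == b x then a x else None.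
Definition pdiff n (a c : pfun (word n)) : pfun (word n) :=
  fun x => if c x is Some _ then None else a x.

Definition epsIf n (a b : pfun (word n)) : Prop :=
  Ifin (pdiff a (pmeet a b)) /\ Ifin (pdiff b (pmeet a b)).

Definition scat n (x : word n) (w : stream n) : stream n :=
  fun k => if k < size x then nth (w 0) x k else w (k - size x).

Definition prefix_code n (X : seq (word n)) : Prop :=
  forall x y, x \in X -> y \in X -> prefix x y -> x = y.

Definition Cuntz n (f : pfun (stream n)) : Prop :=
  exists (X Y : seq (word n)) (f1 : word n -> word n),
    [/\ prefix_code X /\ prefix_code Y,
        {in X &, injective f1},
        (forall y, y \in Y <-> exists2 x, x \in X & f1 x = y),
        (forall x w, x \in X -> f (scat x w) = Some (scat (f1 x) w))
      & (forall w, f w <> None -> exists x w', x \in X /\ w = scat x w')].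

(* A permissible map [a] acts on infinite words through its unbounded points:
   if [x A^*] lies in the domain of [a] and [a x = y], then [x w |-> y w].  This
   germ at infinity is a Cuntz element, whose prefix code is the set of minimal
   unbounded words of the domain, and every Cuntz element [x w |-> f1 x w] is the
   germ of the permissible map [x z |-> f1 x z].  Since a definite language
   contains, beyond some length, only unbounded words, two permissible maps have
   the same germ iff they agree on all sufficiently long words, i.e. iff they
   differ by finite partial bijections; with at least two letters the words [y]
   are recovered from the maps [w |-> y w], which gives the converse. *)

From mathcomp Require Import all_boot.
From mathcomp Require Import boolp.
Set Implicit Arguments. Unset Strict Implicit. Unset Printing Implicit Defensive.

Section Streams.
Variable n : nat.
Implicit Types (x y r : word n) (s : stream n).

Definition stake k s : word n := mkseq s k.
Definition sdrop k s : stream n := fun i => s (k + i).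

Lemma size_stake k s : size (stake k s) = k.
Proof. exact: size_mkseq. Qed.

Lemma stake_scat x s : stake (size x) (scat x s) = x.
Proof.
apply: (@eq_from_nth _ (s 0)); rewrite size_stake // => i Hi.
by rewrite nth_mkseq // /scat Hi.
Qed.

Lemma sdrop_scat x s : sdrop (size x) (scat x s) = s.
Proof.
apply: funext => i; rewrite /sdrop /scat.
by rewrite ltnNge leq_addr /= addKn.
Qed.

Lemma scat_stake_sdrop k s : scat (stake k s) (sdrop k s) = s.
Proof.
apply: funext => i; rewrite /scat /stake /sdrop size_mkseq.
by case: ltnP => Hi; [rewrite nth_mkseq | rewrite subnKC].
Qed.

Lemma scat_nil s : scat [::] s = s.
Proof. by apply: funext => i; rewrite /scat /= subn0. Qed.

Lemma scat_cat x r s : scat (x ++ r) s = scat x (scat r s).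
Proof.
apply: funext => k; rewrite /scat size_cat nth_cat.
case: (ltnP k (size x)) => Hk.
  by rewrite ltn_addr //; apply: set_nth_default.
by rewrite -subnDA -ltn_subLR.
Qed.

Lemma scat_inj x : injective (@scat n x).
Proof. by move=> s s' E; rewrite -(sdrop_scat x s) E sdrop_scat. Qed.

Lemma scat_eq_le x s x' s' : scat x s = scat x' s' -> size x <= size x' ->
  exists r, x' = x ++ r /\ s = scat r s'.
Proof.
move=> E Hle; pose r := stake (size x' - size x) s.
have Es : scat x s = scat (x ++ r) (sdrop (size x' - size x) s).
  by rewrite scat_cat scat_stake_sdrop.
have Ex' : x ++ r = x'.
  have Hsize : size (x ++ r) = size x' by rewrite size_cat size_stake subnKC.
  by rewrite -(stake_scat (x ++ r) (sdrop (size x' - size x) s)) -Es E Hsize stake_scat.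
exists r; split=> //; apply: (@scat_inj x).
by rewrite -scat_cat Ex' -E.
Qed.

Lemma scat_eq_cases x s x' s' : scat x s = scat x' s' ->
  (exists r, x' = x ++ r /\ s = scat r s') \/ (exists r, x = x' ++ r /\ s' = scat r s).
Proof.
move=> E; case: (leqP (size x) (size x')) => Hle; first by left; apply: scat_eq_le.
by right; apply: scat_eq_le; [rewrite E | exact: ltnW].
Qed.

(* With a single letter the words [::] and [:: 0] would have the same right
   translates, so this is where [2 <= n] is needed. *)
Lemma scat_injl (hn : 2 <= n) x x' : (forall s, scat x s = scat x' s) -> x = x'.
Proof.
wlog Hle : x x' / size x <= size x'.
  move=> wlog E; case: (leqP (size x) (size x')) => Hle; first exact: wlog.
  by symmetry; apply: wlog => [|s]; [exact: ltnW | rewrite E].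
move=> E; pose a0 : 'I_n := Ordinal (ltnW hn).
have [[|i r] [Ex' _]] := scat_eq_le (E (fun _ => a0)) Hle.
  by rewrite Ex' cats0.
pose j : 'I_n := if val i == 0 then Ordinal hn else a0.
have := E (fun _ => j); rewrite Ex' scat_cat => /scat_inj /(congr1 (fun s => s 0)).
rewrite /scat /= /j; case: eqP => Hi Hij; [by move: Hi; rewrite -Hij | by case: Hi; rewrite -Hij].
Qed.

End Streams.

Lemma prefix_total (T : eqType) (p q w : seq T) :
  prefix p w -> prefix q w -> prefix p q || prefix q p.
Proof.
move=> /prefixP[u ->] /prefixP[v E].
case: (leqP (size p) (size q)) => H.
  by rewrite prefixE -(takel_cat v H) -E take_size_cat ?eqxx.
by rewrite orbC prefixE -(takel_cat u (ltnW H)) E take_size_cat ?eqxx.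
Qed.

Lemma size_bounded (T : eqType) (s : seq (seq T)) :
  exists M, forall x, x \in s -> size x < M.
Proof. by exists (\max_(t <- s) size t).+1 => x Hx; rewrite ltnS leq_bigmax_seq. Qed.

Section Languages.
Variable n : nat.
Implicit Types (L : word n -> Prop) (x y r z : word n).

Lemma unbounded_mem L x : unbounded L x -> L x.
Proof. by move/(_ [::]); rewrite cats0. Qed.

Lemma unbounded_cat L x r : unbounded L x -> unbounded L (x ++ r).
Proof. by move=> H z; rewrite -catA. Qed.

Lemma definite_prefix_unbounded L (X Y : seq (word n)) y :
  (forall w, L w <-> (w \in X \/ exists2 y, y \in Y & prefix y w)) ->
  y \in Y -> unbounded L y.
Proof. by move=> HL Hy z; apply/HL; right; exists y => //; exact: prefix_prefix. Qed.

Lemma definite_long_unbounded L : definite L ->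
  exists M, forall x r, M <= size x -> L (x ++ r) -> unbounded L x.
Proof.
case=> X [Y HL]; have [M HM] := size_bounded (X ++ Y).
exists M => x r Hx /HL [HX | [y Hy Py]].
  have := HM (x ++ r); rewrite mem_cat HX size_cat => /(_ isT).
  by rewrite ltnNge (leq_trans Hx (leq_addr _ _)).
have HyM : size y < M by apply: HM; rewrite mem_cat Hy orbT.
have /orP[Pyx | Pxy] := prefix_total Py (prefix_prefix x r).
  move: Pyx => /prefixP[t ->].
  by apply: unbounded_cat; apply: definite_prefix_unbounded HL Hy.
by have := leq_ltn_trans (size_prefix Pxy) HyM; rewrite ltnNge Hx.
Qed.

Definition min_unbounded L x :=
  unbounded L x /\ forall x', prefix x' x -> unbounded L x' -> x' = x.

Lemma min_unbounded_prefix_code L (X : seq (word n)) :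
  (forall x, x \in X -> min_unbounded L x) -> prefix_code X.
Proof. by move=> HX x x' /HX [Ux _] /HX [_ Hmin] /Hmin; apply. Qed.

Lemma prefix_code_eq (X : seq (word n)) x x' w : prefix_code X ->
  x \in X -> x' \in X -> prefix x w -> prefix x' w -> x = x'.
Proof.
move=> pcX Hx Hx' Pw P'w.
by case/orP: (prefix_total Pw P'w) => [/(pcX _ _ Hx Hx') | /(pcX _ _ Hx' Hx)].
Qed.

Lemma unbounded_min_prefix L x :
  unbounded L x -> exists2 x0, min_unbounded L x0 & prefix x0 x.
Proof.
move=> Ux; have Hex : exists k, `[< unbounded L (take k x) >].
  by exists (size x); rewrite take_size; apply/asboolP.
case: (ex_minnP Hex) => k /asboolP Uk Hmin.
have Hk : k <= size x by apply: Hmin; rewrite take_size; apply/asboolP.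
exists (take k x); last exact: prefix_take.
split=> // x' Px' Ux'.
have Hx'k : size x' <= k by rewrite -(size_takel Hk) size_prefix.
have Ex' : take (size x') x = x'.
  by move: Px'; rewrite prefixE take_takel // => /eqP.
have : k <= size x' by apply: Hmin; rewrite Ex'; apply/asboolP.
by move=> Hkx'; rewrite -Ex'; congr take; apply/eqP; rewrite eqn_leq Hx'k Hkx'.
Qed.

Lemma min_unbounded_mem L (X Y : seq (word n)) x :
  (forall w, L w <-> (w \in X \/ exists2 y, y \in Y & prefix y w)) ->
  min_unbounded L x -> x \in X ++ Y.
Proof.
move=> HL [Ux Hmin]; rewrite mem_cat.
have /HL [-> // | [y Hy Pyx]] := unbounded_mem Ux.
by rewrite -(Hmin y Pyx (definite_prefix_unbounded HL Hy)) Hy orbT.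
Qed.

End Languages.

Section Germ.
Variable n : nat.
Implicit Types (a b : pfun (word n)) (x y r z : word n) (s w : stream n).

Definition equivariant a := forall x y, a x = Some y ->
  unbounded (pdom a) x -> forall z, a (x ++ z) = Some (y ++ z).

Lemma unbounded_dom a x : unbounded (pdom a) x -> exists y, a x = Some y.
Proof. by move/unbounded_mem; rewrite /pdom; case: (a x) => [y|] // _; exists y. Qed.

(* The germ of [a] at infinity: [x w |-> y w] whenever [x] is unbounded in the
   domain of [a] and [a x = y]; equivariance makes the choice of [x] irrelevant. *)
Definition germ a : pfun (stream n) := fun w =>
  if pselect (exists p : word n * stream n, w = scat p.1 p.2 /\ unbounded (pdom a) p.1)
    is left H then let p := sval (cid H) in omap (fun y => scat y p.2) (a p.1)
  else None.

Lemma germ_scat a x y s : equivariant a -> unbounded (pdom a) x -> a x = Some y ->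
  germ a (scat x s) = Some (scat y s).
Proof.
move=> Ea Ux Hx; rewrite /germ; case: pselect => [H|[]]; last by exists (x, s).
case: (cid H) => [[x' s']] /= [E Ux'].
have [[r [-> ->]] | [r [Ex Es']]] := scat_eq_cases E.
  by rewrite (Ea _ _ Hx Ux) /= scat_cat.
have [y' Hy'] := unbounded_dom Ux'.
move: Hx; rewrite Ex (Ea _ _ Hy' Ux') Hy' => -[<-] /=.
by rewrite Es' scat_cat.
Qed.

Lemma germ_Some a w v : germ a w = Some v ->
  exists x s y, [/\ w = scat x s, unbounded (pdom a) x, a x = Some y & v = scat y s].
Proof.
rewrite /germ; case: pselect => // H; case: (cid H) => [[x s]] /= [E Ux].
by case Hx: (a x) => [y|] //= [<-]; exists x, s, y.
Qed.

End Germ.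

Lemma option_eq_Some (T : Type) (o1 o2 : option T) :
  (forall u, o1 = Some u <-> o2 = Some u) -> o1 = o2.
Proof.
case: o1 => [u1|] H; first by symmetry; apply/H.
by case: o2 H => // u2 /(_ u2) [_ /(_ erefl)].
Qed.

Section Composition.
Variable n : nat.
Implicit Types (a b : pfun (word n)) (x y r z : word n) (s w : stream n).

Lemma unbounded_comp_dom a b x :
  unbounded (pdom (pcompose a b)) x -> unbounded (pdom b) x.
Proof. by move=> H z; move: (H z); rewrite /pdom /pcompose; case: (b _). Qed.

Lemma unbounded_comp a b x y : equivariant b -> unbounded (pdom b) x -> b x = Some y ->
  unbounded (pdom (pcompose a b)) x <-> unbounded (pdom a) y.
Proof. by move=> Eb Ux Hy; split=> H z; move: (H z); rewrite /pdom /pcompose (Eb _ _ Hy Ux). Qed.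

Lemma equivariant_comp a b : equivariant a -> equivariant b -> equivariant (pcompose a b).
Proof.
move=> Ea Eb x y Hxy Ux z; have Ubx := unbounded_comp_dom Ux.
move: Hxy; rewrite /pcompose; case Hx: (b x) => [y1|] //= Hy1.
have Uay1 : unbounded (pdom a) y1 by rewrite -(unbounded_comp a Eb Ubx Hx).
by rewrite (Eb _ _ Hx Ubx) /= (Ea _ _ Hy1 Uay1).
Qed.

Lemma germ_Some_beyond a y s u : equivariant a -> germ a (scat y s) = Some u ->
  exists r s' y', [/\ s = scat r s', unbounded (pdom a) (y ++ r), a (y ++ r) = Some y'
                   & u = scat y' s'].
Proof.
move=> Ea /germ_Some [x [s1 [y1 [E Ux Hx ->]]]].
have [[r [Ex Es]] | [r [Ey Es1]]] := scat_eq_cases E.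
  by exists r, s1, y1; rewrite -Ex.
exists [::], s, (y1 ++ r); rewrite cats0 scat_nil Ey Es1 scat_cat; split=> //.
- exact: unbounded_cat.
- exact: Ea.
Qed.

Lemma germ_comp a b : equivariant a -> equivariant b ->
  peq (germ (pcompose a b)) (pcompose (germ a) (germ b)).
Proof.
move=> Ea Eb w; apply: option_eq_Some => u; split.
- move=> /germ_Some [x [s [u0 [-> Ux Hx ->]]]].
  have Ubx := unbounded_comp_dom Ux; have [y Hy] := unbounded_dom Ubx.
  have Uay : unbounded (pdom a) y by rewrite -(unbounded_comp a Eb Ubx Hy).
  move: Hx; rewrite /pcompose Hy /= => Hay.
  by rewrite (germ_scat s Eb Ubx Hy) /= (germ_scat s Ea Uay Hay).
- rewrite /pcompose; case Hw: (germ b w) => [v|] //= Hv.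
  have [x [s [y [-> Ubx Hy Ev]]]] := germ_Some Hw; rewrite Ev in Hv.
  have [r [s' [y' [-> Uayr Hayr ->]]]] := germ_Some_beyond Ea Hv.
  have Hbxr := Eb _ _ Hy Ubx r.
  have Uxr : unbounded (pdom (pcompose a b)) (x ++ r).
    by rewrite (unbounded_comp a Eb (unbounded_cat r Ubx) Hbxr).
  rewrite -scat_cat; apply: germ_scat (equivariant_comp Ea Eb) Uxr _.
  by rewrite /pcompose Hbxr.
Qed.

End Composition.

Section Kernel.
Variable n : nat.
Implicit Types (a b : pfun (word n)) (x y r z : word n) (s w : stream n).

Definition eventually_agree a b := exists M, forall x, M <= size x -> a x = b x.

Lemma eventually_agree_sym a b : eventually_agree a b -> eventually_agree b a.
Proof. by case=> M HM; exists M => x /HM. Qed.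

Definition short_words M : seq (word n) :=
  flatten [seq [seq val t | t : k.-tuple 'I_n] | k <- iota 0 M].

Lemma short_words_mem M x : size x < M -> x \in short_words M.
Proof.
move=> Hx; apply/flattenP; exists [seq val t | t : (size x).-tuple 'I_n].
  by apply/mapP; exists (size x); rewrite ?mem_iota.
by apply/mapP; exists (in_tuple x); rewrite ?mem_enum.
Qed.

Lemma pmeetC a b : pmeet a b = pmeet b a.
Proof. by apply: funext => x; rewrite /pmeet eq_sym; case: eqP => [->|]. Qed.

Lemma pdiff_pmeet a b x : pdiff a (pmeet a b) x = if a x == b x then None else a x.
Proof. by rewrite /pdiff /pmeet; case: eqP => [->|//]; case: (b x). Qed.

Lemma epsIf_eventually_agree a b : epsIf a b -> eventually_agree a b.
Proof.
case=> [[_ [s1 H1] _] [_ [s2 H2] _]]; have [M HM] := size_bounded (s1 ++ s2).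
exists M => x Hx; apply/eqP; apply: contraTT Hx => Hne.
rewrite -ltnNge HM // mem_cat.
have : pdom (pdiff a (pmeet a b)) x \/ pdom (pdiff b (pmeet a b)) x.
  rewrite /pdom [in pdiff b _]pmeetC !pdiff_pmeet [b x == _]eq_sym (negbTE Hne).
  by move: Hne; case: (a x) => [?|]; case: (b x) => [?|] // _; [left | left | right].
by case=> [/H1 | /H2] ->; rewrite ?orbT.
Qed.

Lemma Ifin_pdiff_pmeet a b M : pinj a -> (forall x, M <= size x -> a x = b x) ->
  Ifin (pdiff a (pmeet a b)).
Proof.
move=> Ia HM.
have Hdom x : pdom (pdiff a (pmeet a b)) x -> x \in short_words M.
  rewrite /pdom pdiff_pmeet.
  by case: (leqP M (size x)) => [/HM -> | /short_words_mem //]; rewrite eqxx.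
split.
- by move=> x x' y; rewrite !pdiff_pmeet; case: eqP => // _; case: eqP => // _; apply: Ia.
- by exists (short_words M).
- exists (pmap a (short_words M)) => y [x Hx]; rewrite mem_pmap; apply/mapP; exists x.
    by apply: Hdom; rewrite /pdom Hx.
  by move: Hx; rewrite pdiff_pmeet; case: eqP.
Qed.

Lemma eventually_agree_epsIf a b : pinj a -> pinj b -> eventually_agree a b -> epsIf a b.
Proof.
move=> Ia Ib [M HM]; split; first exact: Ifin_pdiff_pmeet Ia HM.
by rewrite pmeetC; apply: Ifin_pdiff_pmeet Ib _ => x /HM.
Qed.

Lemma germ_Some_eventually a b w v : equivariant a -> equivariant b ->
  eventually_agree a b -> germ a w = Some v -> germ b w = Some v.
Proof.
move=> Ea Eb [M HM] /germ_Some [x [s [y [-> Ux Hx ->]]]].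
pose r := stake M s.
have HMr z : M <= size ((x ++ r) ++ z) by rewrite !size_cat size_stake -addnA addnCA leq_addr.
have Ubxr : unbounded (pdom b) (x ++ r) by move=> z; rewrite /pdom -HM // -catA; apply: Ux.
have Hbxr : b (x ++ r) = Some (y ++ r) by rewrite -HM ?(Ea _ _ Hx Ux) // -[x ++ r]cats0.
by have := germ_scat (sdrop M s) Eb Ubxr Hbxr; rewrite !scat_cat scat_stake_sdrop.
Qed.

Lemma germ_eventually_agree a b : equivariant a -> equivariant b ->
  eventually_agree a b -> peq (germ a) (germ b).
Proof.
move=> Ea Eb Hab w; apply: option_eq_Some => v.
by split; apply: germ_Some_eventually => //; apply: eventually_agree_sym.
Qed.

Lemma peq_germ_eventually_sub (hn : 2 <= n) a b : equivariant a -> equivariant b ->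
  definite (pdom a) -> definite (pdom b) -> peq (germ a) (germ b) ->
  exists M, forall x y, M <= size x -> a x = Some y -> b x = Some y.
Proof.
move=> Ea Eb Da Db Eab.
have [Ma HMa] := definite_long_unbounded Da; have [Mb HMb] := definite_long_unbounded Db.
exists (maxn Ma Mb) => x y; rewrite geq_max => /andP[Hxa Hxb] Hx.
have Uax : unbounded (pdom a) x by apply: HMa [::] Hxa _; rewrite cats0 /pdom Hx.
have Hb s : germ b (scat x s) = Some (scat y s) by rewrite -Eab (germ_scat s Ea Uax Hx).
have [r [_ [_ [_ Ubxr _ _]]]] := germ_Some_beyond Eb (Hb (fun _ => Ordinal (ltnW hn))).
have Ubx : unbounded (pdom b) x := HMb x r Hxb (unbounded_mem Ubxr).
have [y' Hy'] := unbounded_dom Ubx.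
suff -> : y = y' by [].
by apply: (scat_injl hn) => s; have := germ_scat s Eb Ubx Hy'; rewrite Hb => -[].
Qed.

Lemma peq_germ_eventually_agree (hn : 2 <= n) a b : equivariant a -> equivariant b ->
  definite (pdom a) -> definite (pdom b) -> peq (germ a) (germ b) -> eventually_agree a b.
Proof.
move=> Ea Eb Da Db Eab.
have [M1 H1] := peq_germ_eventually_sub hn Ea Eb Da Db Eab.
have [M2 H2] := peq_germ_eventually_sub hn Eb Ea Db Da (fun w => esym (Eab w)).
exists (maxn M1 M2) => x; rewrite geq_max => /andP[Hx1 Hx2].
by apply: option_eq_Some => y; split; [exact: H1 | exact: H2].
Qed.

End Kernel.

Section GermCuntz.
Variable n : nat.
Implicit Types (a : pfun (word n)) (x y : word n) (w : stream n).

Lemma prefix_code_image a (X : seq (word n)) f1 : pinj a -> equivariant a ->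
  prefix_code X -> (forall x, x \in X -> unbounded (pdom a) x /\ a x = Some (f1 x)) ->
  prefix_code (map f1 X).
Proof.
move=> Ia Ea pcX HX _ _ /mapP[x Hx ->] /mapP[x' Hx' ->] /prefixP[r Er].
have [Ux Hx1] := HX x Hx; have [_ Hx'1] := HX x' Hx'.
have Exr : x ++ r = x' by apply: (Ia _ _ (f1 x')) Hx'1; rewrite (Ea _ _ Hx1 Ux) Er.
by rewrite (pcX x x') // -Exr prefix_prefix.
Qed.

(* The prefix code of the Cuntz element consists of the minimal unbounded
   words of the domain; they all lie in [X ++ Y], which makes it finite. *)
Lemma CT_Cuntz a : CT a -> Cuntz (germ a).
Proof.
case=> Ia [X [Y HD]] _ _ Ea.
pose Xm := [seq x <- X ++ Y | `[< min_unbounded (pdom a) x >]].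
pose f1 x := odflt x (a x).
have pcX : prefix_code Xm.
  apply: (@min_unbounded_prefix_code _ (pdom a)) => x.
  by rewrite mem_filter => /andP[/asboolP ? _].
have HXm x : x \in Xm -> unbounded (pdom a) x /\ a x = Some (f1 x).
  rewrite mem_filter => /andP[/asboolP [Ux _] _]; split=> //.
  by have [y Hy] := unbounded_dom Ux; rewrite /f1 Hy.
exists Xm, (map f1 Xm), f1; split.
- by split=> //; apply: prefix_code_image Ia Ea pcX HXm.
- move=> x x' /HXm [_ Hx] /HXm [_ Hx'] E.
  by apply: (Ia _ _ (f1 x)) Hx _; rewrite E.
- by move=> y; split=> [/mapP[x Hx ->] | [x Hx <-]]; [exists x | exact: map_f].
- by move=> x s /HXm [Ux Hx]; apply: germ_scat.
- move=> w; case Hw: (germ a w) => [v|] // _.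
  have [x [s [y [-> Ux _ _]]]] := germ_Some Hw.
  have [x0 Mx0 /prefixP[r ->]] := unbounded_min_prefix Ux.
  exists x0, (scat r s); split; last exact: scat_cat.
  by rewrite mem_filter (min_unbounded_mem HD Mx0) andbT; apply/asboolP.
Qed.

End GermCuntz.

Section Lift.
Variables (n : nat) (X Y : seq (word n)) (f1 : word n -> word n).
Hypotheses (pcX : prefix_code X) (pcY : prefix_code Y).
Hypotheses (f1_inj : {in X &, injective f1})
           (f1_onto : forall y, y \in Y <-> exists2 x, x \in X & f1 x = y).
Implicit Types (x y z w v : word n).

Definition lift : pfun (word n) := fun w =>
  if [seq x <- X | prefix x w] is x :: _ then Some (f1 x ++ drop (size x) w) else None.

Lemma lift_cat x z : x \in X -> lift (x ++ z) = Some (f1 x ++ z).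
Proof.
move=> Hx; rewrite /lift; case E: [seq _ <- X | _] => [|x0 l].
  have : x \in [seq x0 <- X | prefix x0 (x ++ z)] by rewrite mem_filter prefix_prefix.
  by rewrite E.
have := mem_head x0 l; rewrite -E mem_filter => /andP[Px0 Hx0].
by rewrite (prefix_code_eq pcX Hx0 Hx Px0 (prefix_prefix x z)) drop_size_cat.
Qed.

Lemma lift_Some w v : lift w = Some v ->
  exists x z, [/\ x \in X, w = x ++ z & v = f1 x ++ z].
Proof.
rewrite /lift; case E: [seq _ <- X | _] => [|x l] // [<-].
have := mem_head x l; rewrite -E mem_filter => /andP[/prefixP[z ->] Hx].
by exists x, z; rewrite drop_size_cat.
Qed.

Lemma lift_domP w : pdom lift w <-> exists2 x, x \in X & prefix x w.
Proof.
rewrite /pdom; split.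
  case Hw: (lift w) => [v|] // _; have [x [z [Hx -> _]]] := lift_Some Hw.
  by exists x; rewrite ?prefix_prefix.
by case=> x Hx /prefixP[z ->]; rewrite lift_cat.
Qed.

Lemma lift_ranP v : pran lift v <-> exists2 y, y \in Y & prefix y v.
Proof.
split.
  case=> w /lift_Some [x [z [Hx _ ->]]]; exists (f1 x); rewrite ?prefix_prefix //.
  by apply/f1_onto; exists x.
by case=> y /f1_onto [x Hx <-] /prefixP[z ->]; exists (x ++ z); rewrite lift_cat.
Qed.

Lemma lift_dom_unbounded w : pdom lift w -> unbounded (pdom lift) w.
Proof. by case/lift_domP=> x Hx Pxw z; apply/lift_domP; exists x; rewrite ?prefix_catl. Qed.

Lemma lift_ran_unbounded v : pran lift v -> unbounded (pran lift) v.
Proof. by case/lift_ranP=> y Hy Pyv z; apply/lift_ranP; exists y; rewrite ?prefix_catl. Qed.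

Lemma lift_inj : pinj lift.
Proof.
move=> w w' v /lift_Some [x [z [Hx -> ->]]] /lift_Some [x' [z' [Hx' -> E]]].
have Yx : f1 x \in Y by apply/f1_onto; exists x.
have Yx' : f1 x' \in Y by apply/f1_onto; exists x'.
have Ef : f1 x = f1 x'.
  by apply: prefix_code_eq pcY Yx Yx' (prefix_prefix _ z) _; rewrite E prefix_prefix.
have Ex := f1_inj Hx Hx' Ef; rewrite Ex; congr cat.
by move: E; rewrite Ef => /(congr1 (drop (size (f1 x')))); rewrite !drop_size_cat.
Qed.

Lemma lift_equivariant : equivariant lift.
Proof. by move=> w v /lift_Some [x [z [Hx -> ->]]] _ z'; rewrite -!catA lift_cat. Qed.

Lemma CT_lift : CT lift.
Proof.
split.
- exact: lift_inj.
- by exists [::], X => w; rewrite lift_domP; split=> [|[]//]; right.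
- by exists [::], Y => v; rewrite lift_ranP; split=> [|[]//]; right.
- move=> w v Hw; split=> _.
    by apply: lift_ran_unbounded; exists w.
  by apply: lift_dom_unbounded; rewrite /pdom Hw.
- exact: lift_equivariant.
Qed.

Lemma germ_lift (g : pfun (stream n)) :
  (forall x s, x \in X -> g (scat x s) = Some (scat (f1 x) s)) ->
  (forall s, g s <> None -> exists x s', x \in X /\ s = scat x s') ->
  peq (germ lift) g.
Proof.
move=> Hg Hdom s; apply: option_eq_Some => u; split.
  by case/germ_Some=> x [s1 [y [-> _ /lift_Some [x0 [z [Hx0 -> ->]]] ->]]]; rewrite !scat_cat Hg.
move=> Hs; have [x [s' [Hx Es]]] : exists x s', x \in X /\ s = scat x s'.
  by apply: Hdom; rewrite Hs.
have Hfx : lift x = Some (f1 x) by have := lift_cat [::] Hx; rewrite !cats0.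
have Ux : unbounded (pdom lift) x by apply: lift_dom_unbounded; rewrite /pdom Hfx.
by move: Hs; rewrite Es Hg // (germ_scat s' lift_equivariant Ux Hfx).
Qed.

End Lift.

Lemma Cuntz_germ n (g : pfun (stream n)) : Cuntz g -> exists2 a, CT a & peq (germ a) g.
Proof.
case=> X [Y [f1 [[pcX pcY] f1_inj f1_onto Hg Hdom]]].
exists (lift X f1); first exact: CT_lift pcX pcY f1_inj f1_onto.
exact (germ_lift pcX Hg Hdom).
Qed.

Theorem proposition3p17 (n : nat) (hn : 2 <= n) :
  exists Phi : pfun (word n) -> pfun (stream n),
    [/\ (forall a, CT a -> Cuntz (Phi a)),
        (forall a b, CT a -> CT b -> peq (Phi (pcompose a b)) (pcompose (Phi a) (Phi b))),
        (forall g, Cuntz g -> exists2 a, CT a & peq (Phi a) g)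
      & (forall a b, CT a -> CT b -> (epsIf a b <-> peq (Phi a) (Phi b)))].
Proof.
exists (@germ n); split.
- exact: CT_Cuntz.
- by move=> a b [_ _ _ _ Ea] [_ _ _ _ Eb]; apply: germ_comp.
- exact: Cuntz_germ.
- move=> a b [Ia Da _ _ Ea] [Ib Db _ _ Eb]; split.
    by move/epsIf_eventually_agree; apply: germ_eventually_agree.
  by move/(peq_germ_eventually_agree hn Ea Eb Da Db); apply: eventually_agree_epsIf.
Qed.
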